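(* Let $c>0$, $\varepsilon>0$, $\Delta t,\Delta x>0$, $0\le a_\infty$, and for each $n$ and $j\in\mathbb{Z}$ let $a_{j-\frac12,L}^n, a_{j-\frac12,R}^n \in [-a_\infty, a_\infty]$ be given. Define $$\kappa_{j-\frac12,L}^n = \frac{a_{j-\frac12,L}^n}{1 - \exp\!\big(-a_{j-\frac12,L}^n \Delta x/(\varepsilon c^2)\big)}, \qquad \kappa_{j-\frac12,R}^n = \frac{a_{j-\frac12,R}^n}{1 - \exp\!\big(a_{j-\frac12,R}^n \Delta x/(\varepsilon c^2)\big)}$$ (extended by continuity at $0$), write $D_{j\pm\frac12}^n = c - \kappa_{j\pm\frac12,R}^n + \kappa_{j\pm\frac12,L}^n$ and $\lambda = \frac{c\Delta t}{\Delta x}$, and consider the well-balanced scheme $$\mu_j^{n+1} = (1-\lambda)\mu_j^n - \lambda\frac{c - \kappa_{j+\frac12,R}^n - \kappa_{j+\frac12,L}^n}{D_{j+\frac12}^n}\nu_j^n - 2\lambda\frac{\kappa_{j+\frac12,R}^n}{D_{j+\frac12}^n}\mu_{j+1}^n,$$ $$\nu_j^{n+1} = (1-\lambda)\nu_j^n - \lambda\frac{c + \kappa_{j-\frac12,R}^n + \kappa_{j-\frac12,L}^n}{D_{j-\frac12}^n}\mu_j^n + 2\lambda\frac{\kappa_{j-\frac12,L}^n}{D_{j-\frac12}^n}\nu_{j-1}^n.$$ Under the CFL condition $\frac{c\Delta t}{\Delta x} \le 1$ and the subcharacteristic condition $c \ge a_\infty$, for every $n\in\mathbb{N}$ (with $(\mu^n,\nu^n)\in\ell^1(\mathbb{Z})^2$)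 $$\sum_{j\in\mathbb{Z}}\big(|\mu_j^{n+1}| + |\nu_j^{n+1}|\big) \leq \sum_{j\in\mathbb{Z}}\big(|\mu_j^{n}| + |\nu_j^{n}|\big).$$
   Context: The unknowns are $\mu_j^n = \sigma_j^n - c\rho_j^n$, $\nu_j^n = \sigma_j^n + c\rho_j^n$, approximations of the relaxation system $\partial_t\rho + \partial_x\sigma = 0$, $\partial_t\sigma + c^2\partial_x\rho = \frac1\varepsilon(a[\rho]\rho - \sigma)$ on the grid $x_j = j\Delta x$, $t^n = n\Delta t$. In the paper the interface velocities $a_{j-\frac12,L/R}^n$ are computed by a fixed-point procedure from an $a_\infty$-Lipschitz interaction potential, which guarantees $|a_{j-\frac12,L/R}^n|\le a_\infty$. *)

From Stdlib Require Import Reals ZArith.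
From Coquelicot Require Import Coquelicot.
Open Scope R_scope.

(* kappa_L(a) = a / (1 - exp(-a dx/(eps c^2))), extended by continuity at 0
   (limit eps c^2 / dx). *)
Definition kappaL (eps c dx a : R) : R :=
  if Req_EM_T a 0 then eps * c ^ 2 / dx
  else a / (1 - exp (- (a * dx) / (eps * c ^ 2))).

(* kappa_R(a) = a / (1 - exp(a dx/(eps c^2))), extended by continuity at 0
   (limit - eps c^2 / dx). *)
Definition kappaR (eps c dx a : R) : R :=
  if Req_EM_T a 0 then - (eps * c ^ 2 / dx)
  else a / (1 - exp ((a * dx) / (eps * c ^ 2))).

(* Absolute summability of f : Z -> R (membership in l^1(Z)),
   split into j >= 0 and j <= -1. *)
Definition summableZ (f : Z -> R) : Prop :=
  ex_series (fun k : nat => Rabs (f (Z.of_nat k))) /\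
  ex_series (fun k : nat => Rabs (f (- Z.of_nat (S k))%Z)).

Definition sumZ (f : Z -> R) : R :=
  Series (fun k : nat => f (Z.of_nat k)) +
  Series (fun k : nat => f (- Z.of_nat (S k))%Z).

From Stdlib Require Import Reals ZArith Lra Lia Psatz FunctionalExtensionality.
From Coquelicot Require Import Coquelicot.
Open Scope R_scope.

(* The scheme is a positive, conservative redistribution of |mu| and |nu|.
   1. Interface weights.  Both kappa_L and kappa_R are rescalings of
      bern x = x / (1 - exp (- x)): kappa_L a = s * bern (a / s) and
      kappa_R a = - kappa_L (- a), with s = eps c^2 / dx.  Convexity of exp
      makes bern positive and nondecreasing, and bern x - bern (- x) = x.
      Hence, under the subcharacteristic condition |a| <= a_inf <= c,
      kappa_L > 0 > kappa_R and |kappa_L + kappa_R| <= c.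
   2. Scheme coefficients.  For such kappa's the four coefficients of the
      update are nonnegative weights with alpha + delta = 1 and
      beta + gamma = 1; with the CFL condition 0 <= lambda <= 1 the triangle
      inequality bounds |mu_j^{n+1}| and |nu_j^{n+1}| by convex combinations.
   3. Summation on Z.  The bounds say that site j keeps part of its mass and
      receives what its neighbours j + 1 and j - 1 send; summing over Z, with
      translation invariance of the sum, gives the decrease of the l^1 norm. *)

Lemma exp_chord (t u : R) : 0 <= t <= 1 -> exp (t * u) <= t * exp u + (1 - t).
Proof.
  intros Ht.
  (* Tangent line of exp at t u, evaluated at u and at 0. *)
  assert (Tu : exp (t * u) * (1 + (u - t * u)) <= exp u).
  { replace (exp u) with (exp (t * u) * exp (u - t * u))
      by (rewrite <- exp_plus; f_equal; ring).
    pose proof (exp_pos (t * u)). pose proof (exp_ineq1_le (u - t * u)). nra. }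
  assert (T0 : exp (t * u) * (1 - t * u) <= 1).
  { assert (E : exp (t * u) * exp (- (t * u)) = 1)
      by (rewrite <- exp_plus, Rplus_opp_r; apply exp_0).
    pose proof (exp_pos (t * u)). pose proof (exp_ineq1_le (- (t * u))). nra. }
  nra.
Qed.

Definition omexp (x : R) : R := 1 - exp (- x).

Lemma omexp_le_id (x : R) : omexp x <= x.
Proof. unfold omexp; pose proof (exp_ineq1_le (- x)); lra. Qed.

Lemma omexp_sign (x : R) : x <> 0 -> 0 < x * omexp x.
Proof.
  intros Hx; unfold omexp. rewrite <- exp_0.
  destruct (Rlt_or_le x 0) as [Hn | Hp].
  - pose proof (exp_increasing 0 (- x) ltac:(lra)). nra.
  - pose proof (exp_increasing (- x) 0 ltac:(lra)). nra.
Qed.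

(* Concavity of omexp with omexp 0 = 0: t omexp u <= omexp (t u) for t in [0, 1]. *)
Lemma omexp_superlinear (t u : R) : 0 <= t <= 1 -> t * omexp u <= omexp (t * u).
Proof.
  intros Ht; unfold omexp. pose proof (exp_chord t (- u) Ht).
  replace (- (t * u)) with (t * - u) by ring. lra.
Qed.

Lemma omexp_chord (x y : R) : x < y -> 0 < x \/ y < 0 -> x * omexp y <= y * omexp x.
Proof.
  intros Hxy [Hx | Hy].
  - assert (Ht : 0 <= x / y <= 1).
    { split; [apply Rlt_le, Rdiv_lt_0_compat; lra |].
      apply (Rmult_le_reg_r y); [lra |]. field_simplify; lra. }
    pose proof (omexp_superlinear (x / y) y Ht) as Hs.
    replace (x / y * y) with x in Hs by (field; lra).
    apply (Rmult_le_compat_l y) in Hs; [| lra].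
    replace (y * (x / y * omexp y)) with (x * omexp y) in Hs by (field; lra). lra.
  - assert (Ht : 0 <= y / x <= 1).
    { replace (y / x) with (- y / - x) by (field; lra).
      split; [apply Rlt_le, Rdiv_lt_0_compat; lra |].
      apply (Rmult_le_reg_r (- x)); [lra |]. field_simplify; lra. }
    pose proof (omexp_superlinear (y / x) x Ht) as Hs.
    replace (y / x * x) with y in Hs by (field; lra).
    apply (Rmult_le_compat_l (- x)) in Hs; [| lra].
    replace (- x * (y / x * omexp x)) with (- (y * omexp x)) in Hs by (field; lra). lra.
Qed.

(* The function x / (1 - exp (- x)), extended by continuity with value 1 at 0
   (a reflected Bernoulli function); both kappa's are rescalings of it. *)
Definition bern (x : R) : R := if Req_EM_T x 0 then 1 else x / omexp x.

Lemma bern_nz (x : R) : x <> 0 -> bern x = x / omexp x.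
Proof. intros Hx; unfold bern; destruct (Req_EM_T x 0); [contradiction | reflexivity]. Qed.

Lemma bern_0 : bern 0 = 1.
Proof. unfold bern; destruct (Req_EM_T 0 0); [reflexivity | contradiction]. Qed.

Lemma bern_pos (x : R) : 0 < bern x.
Proof.
  destruct (Req_dec x 0) as [-> | Hx]; [rewrite bern_0; lra |].
  rewrite bern_nz by exact Hx. pose proof (omexp_sign x Hx).
  replace (x / omexp x) with (x * x / (x * omexp x)) by (field; split; intro Z; rewrite Z in *; lra).
  apply Rdiv_lt_0_compat; nra.
Qed.

(* bern lies below 1 on the negative half-line and above 1 on the positive
   one, since |omexp x| <= |x|. *)
Lemma bern_nonpos_le_1 (x : R) : x <= 0 -> bern x <= 1.
Proof.
  intros Hx. destruct (Req_dec x 0) as [-> | Hx0]; [rewrite bern_0; lra |].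
  rewrite bern_nz by exact Hx0. pose proof (omexp_sign x Hx0). pose proof (omexp_le_id x).
  assert (omexp x < 0) by nra.
  apply (Rmult_le_reg_r (- omexp x)); [lra |].
  replace (x / omexp x * - omexp x) with (- x) by (field; lra). lra.
Qed.

Lemma bern_nonneg_ge_1 (x : R) : 0 <= x -> 1 <= bern x.
Proof.
  intros Hx. destruct (Req_dec x 0) as [-> | Hx0]; [rewrite bern_0; lra |].
  rewrite bern_nz by exact Hx0. pose proof (omexp_sign x Hx0). pose proof (omexp_le_id x).
  assert (0 < omexp x) by nra.
  apply (Rmult_le_reg_r (omexp x)); [lra |].
  replace (x / omexp x * omexp x) with x by (field; lra). lra.
Qed.

(* On each open half-line, monotonicity of x / omexp x is the chord comparison. *)
Lemma bern_mono_same_sign (x y : R) : x < y -> 0 < x \/ y < 0 -> bern x <= bern y.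
Proof.
  intros Hxy Hsign. pose proof (omexp_chord x y Hxy Hsign).
  assert (Hx0 : x <> 0) by (destruct Hsign; lra).
  assert (Hy0 : y <> 0) by (destruct Hsign; lra).
  pose proof (omexp_sign x Hx0). pose proof (omexp_sign y Hy0).
  assert (Hhh : 0 < omexp x * omexp y).
  { destruct Hsign as [Hpos | Hneg].
    - assert (0 < omexp x) by nra. assert (0 < omexp y) by nra. nra.
    - assert (omexp x < 0) by nra. assert (omexp y < 0) by nra. nra. }
  assert (omexp x <> 0 /\ omexp y <> 0) as [Hhx Hhy] by (split; intro Z; rewrite Z in *; lra).
  rewrite !bern_nz by assumption.
  apply (Rmult_le_reg_r (omexp x * omexp y)); [exact Hhh |].
  replace (x / omexp x * (omexp x * omexp y)) with (x * omexp y) by (field; exact Hhx).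
  replace (y / omexp y * (omexp x * omexp y)) with (y * omexp x) by (field; exact Hhy). lra.
Qed.

Lemma bern_mono (x y : R) : x <= y -> bern x <= bern y.
Proof.
  intros Hxy. destruct (Req_dec x y) as [-> | Hne]; [lra |].
  destruct (Rlt_or_le 0 x) as [Hx | Hx]; [apply bern_mono_same_sign; lra |].
  destruct (Rlt_or_le y 0) as [Hy | Hy]; [apply bern_mono_same_sign; lra |].
  pose proof (bern_nonpos_le_1 x Hx). pose proof (bern_nonneg_ge_1 y Hy). lra.
Qed.

Lemma bern_reflect (x : R) : bern x - bern (- x) = x.
Proof.
  destruct (Req_dec x 0) as [-> | Hx]; [rewrite Ropp_0; ring |].
  rewrite !bern_nz by lra. unfold omexp. rewrite Ropp_involutive, exp_Ropp.
  assert (He : exp x <> 1).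
  { intro E. rewrite <- exp_0 in E. apply exp_inv in E. lra. }
  pose proof (exp_pos x).
  replace (1 - / exp x) with ((exp x - 1) / exp x) by (field; lra).
  field. repeat split; lra.
Qed.

Section Kappa.
Variables (eps c dx : R).
Hypotheses (Heps : 0 < eps) (Hc : 0 < c) (Hdx : 0 < dx).

Let s := eps * c ^ 2 / dx.

Let s_pos : 0 < s.
Proof. unfold s; apply Rdiv_lt_0_compat; [apply Rmult_lt_0_compat; [| apply pow_lt] |]; lra. Qed.

Lemma kappaL_bern (a : R) : kappaL eps c dx a = s * bern (a / s).
Proof.
  pose proof s_pos as Hs.
  assert (Harg : - (a * dx) / (eps * c ^ 2) = - (a / s))
    by (unfold s; field; repeat split; try apply pow_nonzero; lra).
  destruct (Req_dec a 0) as [-> | Ha].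
  - unfold kappaL, bern. rewrite !Rdiv_0_l.
    destruct (Req_EM_T 0 0); [unfold s; ring | contradiction].
  - assert (Has : a / s <> 0).
    { intro Z. apply Ha. replace a with (a / s * s) by (field; lra). rewrite Z; ring. }
    pose proof (omexp_sign (a / s) Has) as Hsign.
    unfold kappaL; destruct (Req_EM_T a 0); [contradiction |].
    rewrite bern_nz, Harg by exact Has. fold (omexp (a / s)).
    assert (omexp (a / s) <> 0) by (intro Z; rewrite Z in Hsign; lra).
    field; split; lra.
Qed.

Lemma kappaR_reflect (a : R) : kappaR eps c dx a = - kappaL eps c dx (- a).
Proof.
  unfold kappaR, kappaL.
  destruct (Req_EM_T (- a) 0) as [Ha' | Ha']; destruct (Req_EM_T a 0) as [Ha | Ha];
    try (exfalso; lra); [reflexivity |].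
  replace (- (- a * dx) / (eps * c ^ 2)) with (a * dx / (eps * c ^ 2))
    by (field; repeat split; try apply pow_nonzero; lra).
  unfold Rdiv; ring.
Qed.

Lemma kappaL_pos (a : R) : 0 < kappaL eps c dx a.
Proof. rewrite kappaL_bern. pose proof s_pos. pose proof (bern_pos (a / s)). nra. Qed.

Lemma kappaL_mono (a b : R) : a <= b -> kappaL eps c dx a <= kappaL eps c dx b.
Proof.
  intros Hab. rewrite !kappaL_bern. pose proof s_pos.
  apply Rmult_le_compat_l; [lra |]. apply bern_mono.
  unfold Rdiv; apply Rmult_le_compat_r; [left; apply Rinv_0_lt_compat |]; lra.
Qed.

Lemma kappaL_reflect (a : R) : kappaL eps c dx a - kappaL eps c dx (- a) = a.
Proof.
  rewrite !kappaL_bern. pose proof s_pos. rewrite Rdiv_opp_l.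
  rewrite <- Rmult_minus_distr_l, bern_reflect. field; lra.
Qed.

Lemma kappa_bounds (ainf aL aR : R) : ainf <= c ->
  - ainf <= aL <= ainf -> - ainf <= aR <= ainf ->
  0 < kappaL eps c dx aL /\ kappaR eps c dx aR < 0 /\
  - c <= kappaL eps c dx aL + kappaR eps c dx aR <= c.
Proof.
  intros Hac HL HR. rewrite kappaR_reflect.
  pose proof (kappaL_pos aL). pose proof (kappaL_pos (- aR)).
  pose proof (kappaL_reflect ainf).
  pose proof (kappaL_mono aL ainf ltac:(lra)).
  pose proof (kappaL_mono (- ainf) aL ltac:(lra)).
  pose proof (kappaL_mono (- aR) ainf ltac:(lra)).
  pose proof (kappaL_mono (- ainf) (- aR) ltac:(lra)).
  repeat split; lra.
Qed.

End Kappa.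

Lemma summableZ_dominated (f g : Z -> R) :
  (forall j, Rabs (g j) <= Rabs (f j)) -> summableZ f -> summableZ g.
Proof.
  intros Hgf [Hpos Hneg]; split.
  - apply (@ex_series_le R_AbsRing R_CompleteNormedModule _
      (fun k => Rabs (f (Z.of_nat k)))); [| exact Hpos].
    intros k; change norm with Rabs; simpl; rewrite Rabs_Rabsolu; apply Hgf.
  - apply (@ex_series_le R_AbsRing R_CompleteNormedModule _
      (fun k => Rabs (f (- Z.of_nat (S k))%Z))); [| exact Hneg].
    intros k; change norm with Rabs; simpl; rewrite Rabs_Rabsolu; apply Hgf.
Qed.

Lemma summableZ_plus (f g : Z -> R) :
  summableZ f -> summableZ g -> summableZ (fun j => f j + g j).
Proof.
  intros [F1 F2] [G1 G2]; split.
  - apply (@ex_series_le R_AbsRing R_CompleteNormedModule _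
      (fun k => Rabs (f (Z.of_nat k)) + Rabs (g (Z.of_nat k)))).
    + intros k; change norm with Rabs; simpl; rewrite Rabs_Rabsolu; apply Rabs_triang.
    + now apply (ex_series_plus (V := R_NormedModule)).
  - apply (@ex_series_le R_AbsRing R_CompleteNormedModule _
      (fun k => Rabs (f (- Z.of_nat (S k))%Z) + Rabs (g (- Z.of_nat (S k))%Z))).
    + intros k; change norm with Rabs; simpl; rewrite Rabs_Rabsolu; apply Rabs_triang.
    + now apply (ex_series_plus (V := R_NormedModule)).
Qed.

Lemma sumZ_plus (f g : Z -> R) : summableZ f -> summableZ g ->
  sumZ (fun j => f j + g j) = sumZ f + sumZ g.
Proof.
  intros [F1 F2] [G1 G2]. unfold sumZ.
  rewrite !Series_plus by (apply ex_series_Rabs; assumption). ring.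
Qed.

Lemma sumZ_le (f g : Z -> R) :
  (forall j, 0 <= f j <= g j) -> summableZ g -> sumZ f <= sumZ g.
Proof.
  intros Hfg [G1 G2]. unfold sumZ.
  apply Rplus_le_compat; apply Series_le; try (intros; apply Hfg);
    apply ex_series_Rabs; assumption.
Qed.

Lemma summableZ_shift (f : Z -> R) :
  summableZ f <-> summableZ (fun j => f (j + 1)%Z).
Proof.
  unfold summableZ.
  replace (fun k => Rabs (f (Z.of_nat k + 1)%Z)) with (fun k => Rabs (f (Z.of_nat (S k))))
    by (apply functional_extensionality; intros k; do 2 f_equal; lia).
  rewrite (ex_series_incr_1 (fun k => Rabs (f (- Z.of_nat (S k) + 1)%Z))).
  replace (fun k : nat => Rabs (f (- Z.of_nat (S (S k)) + 1)%Z))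
    with (fun k => Rabs (f (- Z.of_nat (S k))%Z))
    by (apply functional_extensionality; intros k; do 2 f_equal; lia).
  rewrite <- (ex_series_incr_1 (fun k => Rabs (f (Z.of_nat k)))). tauto.
Qed.

Lemma sumZ_shift (f : Z -> R) : summableZ f -> sumZ (fun j => f (j + 1)%Z) = sumZ f.
Proof.
  intros Hf. pose proof (proj1 (summableZ_shift f) Hf) as [G1 G2].
  destruct Hf as [F1 F2]. apply ex_series_Rabs in F1, F2, G1, G2.
  unfold sumZ.
  rewrite (Series_incr_1 (fun k => f (Z.of_nat k))) by assumption.
  rewrite (Series_incr_1 (fun k => f (- Z.of_nat (S k) + 1)%Z)) by assumption.
  replace (fun k => f (Z.of_nat k + 1)%Z) with (fun k => f (Z.of_nat (S k)))
    by (apply functional_extensionality; intros k; f_equal; lia).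
  replace (fun k : nat => f (- Z.of_nat (S (S k)) + 1)%Z)
    with (fun k => f (- Z.of_nat (S k))%Z)
    by (apply functional_extensionality; intros k; f_equal; lia).
  replace (- Z.of_nat 1 + 1)%Z with (Z.of_nat 0) by lia. ring.
Qed.

Lemma summableZ_shift_down (f : Z -> R) :
  summableZ f -> summableZ (fun j => f (j - 1)%Z).
Proof.
  intros Hf. apply summableZ_shift.
  replace (fun j => f (j + 1 - 1)%Z) with f
    by (apply functional_extensionality; intros j; f_equal; lia).
  exact Hf.
Qed.

Lemma sumZ_shift_down (f : Z -> R) : summableZ f -> sumZ (fun j => f (j - 1)%Z) = sumZ f.
Proof.
  intros Hf. rewrite <- (sumZ_shift (fun j => f (j - 1)%Z)) by (apply summableZ_shift_down, Hf).
  f_equal. apply functional_extensionality; intros j; f_equal; lia.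
Qed.

(* Conservative redistribution: if the mass S j splits into nonnegative parts
   P j + G j + H j, and f j is bounded by what site j receives (its own part P,
   the part G sent left from j + 1 and the part H sent right from j - 1), then
   f is summable with total mass at most that of S. *)
Lemma sumZ_redistribution (S P G H f : Z -> R) :
  summableZ S ->
  (forall j, 0 <= P j /\ 0 <= G j /\ 0 <= H j) ->
  (forall j, P j + G j + H j = S j) ->
  (forall j, 0 <= f j <= P j + G (j + 1)%Z + H (j - 1)%Z) ->
  summableZ f /\ sumZ f <= sumZ S.
Proof.
  intros HS Hnn Hsplit Hf.
  assert (Hpart : forall g : Z -> R, (forall j, 0 <= g j <= S j) -> summableZ g).
  { intros g Hg. apply (summableZ_dominated S); [| exact HS].
    intros j; specialize (Hg j); rewrite !Rabs_pos_eq; lra. }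
  assert (SP : summableZ P)
    by (apply Hpart; intros j; specialize (Hnn j); specialize (Hsplit j); lra).
  assert (SG : summableZ G)
    by (apply Hpart; intros j; specialize (Hnn j); specialize (Hsplit j); lra).
  assert (SH : summableZ H)
    by (apply Hpart; intros j; specialize (Hnn j); specialize (Hsplit j); lra).
  set (T := fun j => P j + G (j + 1)%Z + H (j - 1)%Z).
  pose proof (proj1 (summableZ_shift G) SG) as SG1.
  pose proof (summableZ_shift_down H SH) as SH1.
  assert (ST : summableZ T) by (repeat apply summableZ_plus; assumption).
  assert (Hmass : sumZ T = sumZ S).
  { unfold T.
    rewrite !sumZ_plus, sumZ_shift, sumZ_shift_down
      by (repeat apply summableZ_plus; assumption).
    rewrite <- !sumZ_plus by (repeat apply summableZ_plus; assumption).
    f_equal. apply functional_extensionality; exact Hsplit. }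
  split.
  - apply (summableZ_dominated T); [| exact ST].
    intros j; specialize (Hf j); rewrite !Rabs_pos_eq; unfold T; lra.
  - rewrite <- Hmass. apply sumZ_le; [exact Hf | exact ST].
Qed.

(* The four coefficients of the update at an interface with weights kL, kR
   (denominator D = c - kR + kL): mu_j^{n+1} takes nu_j with weight alpha and
   mu_{j+1} with weight beta; nu_j^{n+1} takes mu_j with weight gamma and
   nu_{j-1} with weight delta (each multiplied by lambda). *)
Definition wAlpha (c kL kR : R) : R := (c - kR - kL) / (c - kR + kL).
Definition wBeta (c kL kR : R) : R := - 2 * kR / (c - kR + kL).
Definition wGamma (c kL kR : R) : R := (c + kR + kL) / (c - kR + kL).
Definition wDelta (c kL kR : R) : R := 2 * kL / (c - kR + kL).

Lemma Rabs_comb3 (p q r x y z : R) : 0 <= p -> 0 <= q -> 0 <= r ->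
  Rabs (p * x + q * y + r * z) <= p * Rabs x + q * Rabs y + r * Rabs z.
Proof.
  intros Hp Hq Hr.
  pose proof (Rabs_triang (p * x + q * y) (r * z)).
  pose proof (Rabs_triang (p * x) (q * y)).
  rewrite !Rabs_mult, (Rabs_pos_eq p), (Rabs_pos_eq q), (Rabs_pos_eq r) in * by assumption.
  lra.
Qed.

Section Weights.
Variables (c kL kR : R).
Hypotheses (HkL : 0 < kL) (HkR : kR < 0) (Hsub : - c <= kL + kR <= c).

Lemma weights_nonneg :
  0 <= wAlpha c kL kR /\ 0 <= wBeta c kL kR /\ 0 <= wGamma c kL kR /\ 0 <= wDelta c kL kR.
Proof.
  unfold wAlpha, wBeta, wGamma, wDelta.
  repeat split; apply Rmult_le_pos; try (left; apply Rinv_0_lt_compat); lra.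
Qed.

Lemma weights_sum : wAlpha c kL kR + wDelta c kL kR = 1 /\ wBeta c kL kR + wGamma c kL kR = 1.
Proof. unfold wAlpha, wBeta, wGamma, wDelta; split; field; lra. Qed.

Lemma mu_update_bound (lam x y z : R) : 0 <= lam <= 1 ->
  Rabs ((1 - lam) * x - lam * ((c - kR - kL) / (c - kR + kL)) * y
        - 2 * lam * (kR / (c - kR + kL)) * z)
  <= (1 - lam) * Rabs x + lam * wAlpha c kL kR * Rabs y + lam * wBeta c kL kR * Rabs z.
Proof.
  intros Hlam. destruct weights_nonneg as (Ha & Hb & _ & _).
  rewrite <- (Rabs_Ropp y).
  replace ((1 - lam) * x - lam * ((c - kR - kL) / (c - kR + kL)) * y
           - 2 * lam * (kR / (c - kR + kL)) * z)
    with ((1 - lam) * x + lam * wAlpha c kL kR * - y + lam * wBeta c kL kR * z)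
    by (unfold wAlpha, wBeta; field; lra).
  apply Rabs_comb3; try apply Rmult_le_pos; lra.
Qed.

Lemma nu_update_bound (lam x y z : R) : 0 <= lam <= 1 ->
  Rabs ((1 - lam) * x - lam * ((c + kR + kL) / (c - kR + kL)) * y
        + 2 * lam * (kL / (c - kR + kL)) * z)
  <= (1 - lam) * Rabs x + lam * wGamma c kL kR * Rabs y + lam * wDelta c kL kR * Rabs z.
Proof.
  intros Hlam. destruct weights_nonneg as (_ & _ & Hg & Hd).
  rewrite <- (Rabs_Ropp y).
  replace ((1 - lam) * x - lam * ((c + kR + kL) / (c - kR + kL)) * y
           + 2 * lam * (kL / (c - kR + kL)) * z)
    with ((1 - lam) * x + lam * wGamma c kL kR * - y + lam * wDelta c kL kR * z)
    by (unfold wGamma, wDelta; field; lra).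
  apply Rabs_comb3; try apply Rmult_le_pos; lra.
Qed.

End Weights.

(* Any two-field upwind scheme whose updates are dominated by positive
   combinations with weights alpha + delta = 1 and beta + gamma = 1 is an
   l^1 contraction: the mass |mu_j| + |nu_j| is split into the part kept at
   j, the part beta |mu_j| sent to j - 1 and the part delta |nu_j| sent to
   j + 1, which is exactly the situation of sumZ_redistribution. *)
Section Contraction.
Variables (lam : R) (al be ga de : Z -> R) (mu nu mu' nu' : Z -> R).
Hypotheses (Hlam : 0 <= lam <= 1)
  (Hnn : forall j, 0 <= al j /\ 0 <= be j /\ 0 <= ga j /\ 0 <= de j)
  (Hsum : forall j, al j + de j = 1 /\ be j + ga j = 1)
  (Hmu : forall j, Rabs (mu' j) <= (1 - lam) * Rabs (mu j)
          + lam * al (j + 1)%Z * Rabs (nu j) + lam * be (j + 1)%Z * Rabs (mu (j + 1)%Z))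
  (Hnu : forall j, Rabs (nu' j) <= (1 - lam) * Rabs (nu j)
          + lam * ga j * Rabs (mu j) + lam * de j * Rabs (nu (j - 1)%Z)).

Lemma l1_contraction : summableZ mu -> summableZ nu ->
  summableZ mu' /\ summableZ nu' /\
  sumZ (fun j => Rabs (mu' j) + Rabs (nu' j)) <= sumZ (fun j => Rabs (mu j) + Rabs (nu j)).
Proof.
  intros Smu Snu.
  assert (SS : summableZ (fun j => Rabs (mu j) + Rabs (nu j))).
  { apply summableZ_plus; [apply (summableZ_dominated mu) | apply (summableZ_dominated nu)];
      try assumption; intros j; rewrite Rabs_Rabsolu; lra. }
  destruct (sumZ_redistribution
    (fun j => Rabs (mu j) + Rabs (nu j))
    (fun j => (1 - lam) * (Rabs (mu j) + Rabs (nu j))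
              + lam * al (j + 1)%Z * Rabs (nu j) + lam * ga j * Rabs (mu j))
    (fun j => lam * be j * Rabs (mu j))
    (fun j => lam * de (j + 1)%Z * Rabs (nu j))
    (fun j => Rabs (mu' j) + Rabs (nu' j))) as [Sf Hle]; try assumption.
  - intros j. destruct (Hnn j) as (_ & Hb & Hg & _). destruct (Hnn (j + 1)%Z) as (Ha & _ & _ & Hd).
    pose proof (Rabs_pos (mu j)). pose proof (Rabs_pos (nu j)).
    repeat split; repeat apply Rplus_le_le_0_compat; repeat apply Rmult_le_pos; lra.
  - intros j. destruct (Hsum j) as [_ Hbg]. destruct (Hsum (j + 1)%Z) as [Had _].
    transitivity ((1 - lam) * (Rabs (mu j) + Rabs (nu j))
       + lam * (al (j + 1)%Z + de (j + 1)%Z) * Rabs (nu j) + lam * (be j + ga j) * Rabs (mu j));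
      [ring | rewrite Had, Hbg; ring].
  - intros j. cbv beta. replace (j - 1 + 1)%Z with j by lia.
    pose proof (Hmu j). pose proof (Hnu j).
    pose proof (Rabs_pos (mu' j)). pose proof (Rabs_pos (nu' j)). lra.
  - assert (Hdom : forall g : Z -> R, (forall j, Rabs (g j) <= Rabs (mu' j) + Rabs (nu' j)) ->
              summableZ g).
    { intros g Hg. apply (summableZ_dominated (fun j => Rabs (mu' j) + Rabs (nu' j)) g); [intros j | exact Sf].
      rewrite (Rabs_pos_eq (_ + _)) by (apply Rplus_le_le_0_compat; apply Rabs_pos).
      apply Hg. }
    split; [| split; [| exact Hle]]; apply Hdom; intros j;
      pose proof (Rabs_pos (mu' j)); pose proof (Rabs_pos (nu' j)); lra.
Qed.

End Contraction.

Theorem lemma3 (c eps dt dx ainf : R) (aL aR : nat -> Z -> R)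
  (mu nu : nat -> Z -> R) :
  0 < c -> 0 < eps -> 0 < dt -> 0 < dx -> 0 <= ainf ->
  (forall n j, - ainf <= aL n j <= ainf) ->
  (forall n j, - ainf <= aR n j <= ainf) ->
  c * dt / dx <= 1 ->
  ainf <= c ->
  (forall n j,
     let lam := c * dt / dx in
     let kR := kappaR eps c dx (aR n (j + 1)%Z) in
     let kL := kappaL eps c dx (aL n (j + 1)%Z) in
     let D := c - kR + kL in
     mu (S n) j = (1 - lam) * mu n j - lam * ((c - kR - kL) / D) * nu n j
                  - 2 * lam * (kR / D) * mu n (j + 1)%Z) ->
  (forall n j,
     let lam := c * dt / dx in
     let kR := kappaR eps c dx (aR n j) in
     let kL := kappaL eps c dx (aL n j) in
     let D := c - kR + kL in
     nu (S n) j = (1 - lam) * nu n j - lam * ((c + kR + kL) / D) * mu n j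
                  + 2 * lam * (kL / D) * nu n (j - 1)%Z) ->
  forall n : nat,
    summableZ (mu n) -> summableZ (nu n) ->
    summableZ (mu (S n)) /\ summableZ (nu (S n)) /\
    sumZ (fun j => Rabs (mu (S n) j) + Rabs (nu (S n) j))
      <= sumZ (fun j => Rabs (mu n j) + Rabs (nu n j)).
Proof.
  intros Hc Heps Hdt Hdx _ HaL HaR Hcfl Hsubchar Hmu Hnu n.
  assert (Hlam : 0 <= c * dt / dx <= 1).
  { split; [| exact Hcfl]. apply Rlt_le, Rdiv_lt_0_compat; [apply Rmult_lt_0_compat |]; lra. }
  set (kL := fun j => kappaL eps c dx (aL n j)).
  set (kR := fun j => kappaR eps c dx (aR n j)).
  assert (Hk : forall j, 0 < kL j /\ kR j < 0 /\ - c <= kL j + kR j <= c)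
    by (intros j; apply (kappa_bounds eps c dx Heps Hc Hdx ainf); auto).
  apply (l1_contraction (c * dt / dx)
           (fun j => wAlpha c (kL j) (kR j)) (fun j => wBeta c (kL j) (kR j))
           (fun j => wGamma c (kL j) (kR j)) (fun j => wDelta c (kL j) (kR j)));
    try exact Hlam.
  - intros j; destruct (Hk j) as (? & ? & ?); apply weights_nonneg; assumption.
  - intros j; destruct (Hk j) as (? & ? & ?); apply weights_sum; assumption.
  - intros j; rewrite (Hmu n j); destruct (Hk (j + 1)%Z) as (? & ? & ?).
    apply mu_update_bound; assumption.
  - intros j; rewrite (Hnu n j); destruct (Hk j) as (? & ? & ?).
    apply nu_update_bound; assumption.
Qed.
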